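(* Run MUDAN on a reported profile $\theta'$ and suppose the final winner set $W$ is nonempty; let $w^*$ be the last buyer added to $W$. Then for every buyer $i\neq w^*$: $i$ belongs to the explored set $A$ at the moment $w^*$ is selected if and only if there is a directed path from $s$ to $i$ in $G_{\theta'}$ that does not pass through $w^*$ (i.e. $w^*$ is not critical for $i$).
   Context: Single-demand model. A seller $s$ has $m\ge 1$ identical items. Buyers $B=\{1,\dots,n\}$; buyer $i$ has a true valuation $v_i\in\mathbb{R}_{\ge0}$ and true neighbour set $r_i\subseteq B$; the seller has a fixed neighbour set $r_s\subseteq B$. Buyer $i$ reports $(v'_i,r'_i)$ with $v'_i\ge 0$, $r'_i\subseteq r_i$. The profile graph $G_{\theta'}$ of the global report $\theta'$ is the directed graph on $\{s\}\cup B$ with an edge $(x,y)$ iff $y\in r'_x$ (for $x=s$ use $r_s$). A buyer $w$ is critical for a buyer $i$ if every directed path from $s$ to $i$ in $G_{\theta'}$ passes through $w$. Priority rule: each buyer $i$ is given a priority $\sigma_i$ that is a function of its reported neighbour set $r'_i$ only (e.g. $\sigma_i=|r'_i|$), independent of all reported valuations and non-decreasing with respect to inclusion of $r'_i$; ties are broken by a fixed total order on buyers. MUDAN, run on a reported profile $\theta'$. It maintains an explored set $A\subseteq B$, a winner set $W\subseteq A$, remaining supply $m'=m-|W|$, and tentative payments. For current $A,W$ the potential-winner set $P(A,W)$ is: $P=A$ if $|A\setminus W|\le m'$; otherwise $P=W\cup\{$the $m'$ buyers of $A\setminus W$ with highest reported valuations$\}$ (ties broken by a fixed total order). Buyers in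 $A\setminus P$ are called exhausted. Initialise $A=r_s$, $W=\varnothing$, and repeat: (1) Closure: while some buyer $x\in W\cup(A\setminus P(A,W))$ (with $P$ recomputed from the current $A,W$) has $r'_x\not\subseteq A$, set $A\leftarrow A\cup r'_x$. (2) Let $P=P(A,W)$; if $P\setminus W=\varnothing$, stop. (3) Let $w$ be the buyer of $P\setminus W$ with highest priority; set its tentative payment $\hat p_w$ to the $(m'+1)$-th highest reported valuation in $A\setminus W$ (current $m'$, before adding $w$), or $0$ if $|A\setminus W|\le m'$; add $w$ to $W$. Output: every $w\in W$ gets an item and pays $\hat p_w$; other buyers get nothing and pay $0$. *)

From mathcomp Require Import all_boot all_order all_algebra.
Set Implicit Arguments. Unset Strict Implicit. Unset Printing Implicit Defensive.
Import Order.TTheory GRing.Theory Num.Theory.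

(* Buyers are 'I_n; the fixed total order used for tie-breaking is the index
   order on 'I_n.  A reported profile is (v, r) with v : 'I_n -> R the reported
   valuations and r : 'I_n -> {set 'I_n} the reported neighbour sets; rs is the
   seller's neighbour set. *)

Section Mudan.
Variables (R : realDomainType) (n : nat).
Implicit Types (A W S : {set 'I_n}).

Definition better (v : 'I_n -> R) (i j : 'I_n) : bool :=
  ((v j < v i)%R || ((v i == v j) && (i < j)%N)).

Definition topk (v : 'I_n -> R) (k : nat) S : {set 'I_n} :=
  [set x in S | (#|[set y in S | better v y x]| < k)%N].

Definition potential (m : nat) (v : 'I_n -> R) A W : {set 'I_n} :=
  if (#|A :\: W| <= m - #|W|)%N then A
  else W :|: topk v (m - #|W|) (A :\: W).

Definition closure_step (m : nat) (v : 'I_n -> R) (r : 'I_n -> {set 'I_n})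
    W A : {set 'I_n} :=
  match [pick x | (x \in W :|: (A :\: potential m v A W)) && ~~ (r x \subset A)] with
  | Some x => A :|: r x
  | None => A
  end.

(* closure: iterate until fixpoint (each effective step strictly enlarges A,
   so n.+1 iterations reach the fixpoint) *)
Definition closure (m : nat) (v : 'I_n -> R) (r : 'I_n -> {set 'I_n}) A W :=
  iter n.+1 (closure_step m v r W) A.

Definition select (m : nat) (v : 'I_n -> R) (r : 'I_n -> {set 'I_n})
    (prio : {set 'I_n} -> R) A W : option 'I_n :=
  [pick w in potential m v A W :\: W |
     [forall y in potential m v A W :\: W,
        (prio (r y) < prio (r w))%R || ((prio (r y) == prio (r w)) && (w <= y)%N)]].

(* the run of MUDAN from state (A, W): the list of pairs
   (explored set A at the moment of selection, selected winner) *)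
Fixpoint mudan_run (m : nat) (v : 'I_n -> R) (r : 'I_n -> {set 'I_n})
    (prio : {set 'I_n} -> R) (k : nat) A W : seq ({set 'I_n} * 'I_n) :=
  match k with
  | 0 => [::]
  | k'.+1 =>
      let A1 := closure m v r A W in
      match select m v r prio A1 W with
      | None => [::]
      | Some w => (A1, w) :: mudan_run m v r prio k' A1 (w |: W)
      end
  end.

(* full run of MUDAN from A = rs, W = empty (each round adds a new winner, so
   n.+1 rounds suffice for termination) *)
Definition mudan_trace (m : nat) (v : 'I_n -> R) (r : 'I_n -> {set 'I_n})
    (prio : {set 'I_n} -> R) (rs : {set 'I_n}) : seq ({set 'I_n} * 'I_n) :=
  mudan_run m v r prio n.+1 rs set0.

End Mudan.

(* There is a directed path from s to i in the profile graph that avoids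
   buyer w: s -> j (j in rs), then edges x -> y with y \in r x, all buyers
   on the path different from w. *)
Definition reach_avoiding (n : nat) (rs : {set 'I_n}) (r : 'I_n -> {set 'I_n})
    (w i : 'I_n) : bool :=
  [exists j in rs, (j != w) &&
     connect (fun x y : 'I_n => [&& x != w, y != w & y \in r x]) j i].

From mathcomp Require Import all_boot all_order all_algebra.
From mathcomp Require Import zify.
Set Implicit Arguments. Unset Strict Implicit. Unset Printing Implicit Defensive.
Import Order.TTheory GRing.Theory Num.Theory.

(* The proof rests on two observations about the run.
   - Only "expanders" (winners and exhausted buyers) ever open their
     neighbour sets during a closure, and a buyer, once exhausted, stays
     exhausted for the rest of the run.  Since w* is selected as a potential
     winner at the end, it was never an expander before, so every buyer
     explored along the way is reachable by a path avoiding w*.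
   - After w* is added nothing is selected any more, so at that point all
     supply is used up: every explored buyer other than w* is a winner or is
     exhausted, hence an expander.  The explored set is closed, so it
     contains the neighbours of all its buyers except w*, and therefore
     every path from the seller avoiding w* stays inside it. *)

Lemma exists_minimal (T : finType) (lt : rel T) (S : {set T}) :
  irreflexive lt -> transitive lt -> S != set0 ->
  exists2 x, x \in S & forall y, y \in S -> ~~ lt y x.
Proof.
move=> irr tr /set0Pn [x0 Sx0].
have [x Sx xmin] := arg_minnP (fun x => #|[set y in S | lt y x]|) Sx0.
exists x => // y Sy; apply/negP => lt_yx.
have := xmin y Sy; rewrite leqNgt => /negP; apply.
apply: proper_card; apply/properP; split.
  by apply/subsetP => z; rewrite !inE => /andP[-> lt_zy]; exact: tr lt_zy lt_yx.
by exists y; rewrite !inE ?Sy ?lt_yx ?irr.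
Qed.

Section ExtensiveIteration.
Variables (T : finType) (f : {set T} -> {set T}).
Hypothesis f_ext : forall B : {set T}, B \subset f B.

Lemma iter_extensive_mono A j k : j <= k -> iter j f A \subset iter k f A.
Proof.
move/subnK <-; elim: (k - j) => [|d IH] //=.
exact: subset_trans IH (f_ext _).
Qed.

(* The chain cannot grow more than #|T| times, so #|T|.+1 iterations reach a
   fixpoint. *)
Lemma iter_extensive_fixpoint A : f (iter #|T|.+1 f A) = iter #|T|.+1 f A.
Proof.
suff: forall k, f (iter k f A) = iter k f A \/ k <= #|iter k f A|.
  by case/(_ #|T|.+1) => // big; have := max_card (mem (iter #|T|.+1 f A)); rewrite leqNgt big.
elim=> [|k [fix_k|grow_k]]; first by right.
  by left; rewrite /= fix_k fix_k.
have [fix_k|nfix_k] := eqVneq (f (iter k f A)) (iter k f A).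
  by left; rewrite /= fix_k fix_k.
right; apply: leq_ltn_trans grow_k (proper_card _).
by rewrite properEneq eq_sym nfix_k f_ext.
Qed.

End ExtensiveIteration.

Section Ranking.
Variables (R : realDomainType) (n : nat) (f : 'I_n -> R).

(* [better f] ranks by decreasing f, ties broken by index: a strict total
   order.  It is both the valuation ranking and the priority ranking. *)
Lemma better_irr : irreflexive (better f).
Proof. by move=> x; rewrite /better ltxx ltnn andbF. Qed.

Lemma better_trans : transitive (better f).
Proof.
move=> y x z; rewrite /better => /orP[yx|/andP[/eqP fxy xy]] /orP[zy|/andP[/eqP fyz yz]].
- by rewrite (lt_trans zy yx).
- by rewrite -fyz yx.
- by rewrite fxy zy.
- by rewrite fxy fyz eqxx (ltn_trans xy yz) orbT.
Qed.

Lemma better_total x y : x != y -> better f x y || better f y x.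
Proof.
move=> neq_xy; rewrite /better; case: (ltgtP (f x) (f y)) => [||_]; rewrite ?orbT //.
by case: (ltngtP x y) => // /val_inj eq_xy; rewrite eq_xy eqxx in neq_xy.
Qed.

Lemma better_best (S : {set 'I_n}) : S != set0 ->
  exists2 x, x \in S & forall y, y \in S -> ~~ better f y x.
Proof. exact: exists_minimal better_irr better_trans. Qed.

Lemma topk_sub k (S : {set 'I_n}) : topk f k S \subset S.
Proof. by apply/subsetP => x; rewrite inE => /andP[]. Qed.

Lemma topk_unique k (S : {set 'I_n}) x y :
  k <= 1 -> x \in topk f k S -> y \in topk f k S -> x = y.
Proof.
move=> k_le1; rewrite !inE => /andP[Sx cx] /andP[Sy cy].
apply/eqP/negPn/negP => /better_total /orP[b|b].
- have : 0 < #|[set z in S | better f z y]| by apply/card_gt0P; exists x; rewrite inE Sx b.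
  by move/leq_trans/(_ (leq_trans cy k_le1)).
- have : 0 < #|[set z in S | better f z x]| by apply/card_gt0P; exists y; rewrite inE Sy b.
  by move/leq_trans/(_ (leq_trans cx k_le1)).
Qed.

(* The best element of S is always among the top k, for k > 0. *)
Lemma topk_nonempty k (S : {set 'I_n}) : S != set0 -> 0 < k -> topk f k S != set0.
Proof.
move=> S_ne k_gt0; have [x Sx xbest] := better_best S_ne.
apply/set0Pn; exists x; rewrite inE Sx.
suff -> : [set y in S | better f y x] = set0 by rewrite cards0.
apply/setP => y; rewrite !inE; apply/negbTE/negP => /andP[Sy b].
by move: (xbest y Sy); rewrite b.
Qed.

End Ranking.

Section Mudan.
Variables (R : realDomainType) (n m : nat) (v : 'I_n -> R).
Variables (r : 'I_n -> {set 'I_n}) (prio : {set 'I_n} -> R).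
Implicit Types (A B W : {set 'I_n}) (w x : 'I_n).

Local Notation pot := (potential m v).
Local Notation cl := (closure m v r).
Local Notation sel := (select m v r prio).

Definition exhausted A W : {set 'I_n} := A :\: pot A W.

(* Expanders: the buyers whose neighbour sets the closure adds to A. *)
Definition expanders A W : {set 'I_n} := W :|: exhausted A W.

Lemma potential_sub A W : pot A W \subset A :|: W.
Proof.
rewrite /potential; case: ifP => _; first exact: subsetUl.
rewrite subUset subsetUr (subset_trans (topk_sub _ _ _)) //.
exact: subset_trans (subsetDl _ _) (subsetUl _ _).
Qed.

Lemma potential_new A W w : w \in pot A W :\: W -> w \in A :\: W.
Proof.
rewrite !inE => /andP[wW /(subsetP (potential_sub A W))].
by rewrite inE (negbTE wW) orbF.
Qed.

Lemma exhaustedE A W x :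
  (x \in exhausted A W) =
  [&& m - #|W| < #|A :\: W|, x \in A :\: W &
      m - #|W| <= #|[set y in A :\: W | better v y x]|].
Proof.
rewrite /exhausted /potential; case: leqP => short /=; first by rewrite setDv inE.
rewrite !inE leqNgt.
by case: (x \in W); case: (x \in A); rewrite /= ?negbK ?andbT ?ltnS.
Qed.

(* Exploring more buyers only pushes x further down the ranking. *)
Lemma exhausted_grow A A' W : A \subset A' -> exhausted A W \subset exhausted A' W.
Proof.
move=> sAA'; have sD : A :\: W \subset A' :\: W by apply: setSD.
apply/subsetP => x; rewrite !exhaustedE => /and3P[short xAW above].
rewrite (leq_trans short (subset_leq_card sD)) (subsetP sD) //=.
apply: leq_trans above (subset_leq_card _); apply/subsetP => y; rewrite !inE.
by case/andP=> /andP[-> /(subsetP sAA') ->] ->.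
Qed.

Lemma potential_above_exhausted A W w x :
  w \in pot A W :\: W -> x \in exhausted A W -> better v w x.
Proof.
move=> wP xE.
have neq_xw : x != w.
  by apply: contraTneq wP => <-; move: xE; rewrite !inE => /andP[/negbTE -> _]; rewrite andbF.
have := xE; rewrite exhaustedE => /and3P[short xAW above].
move: wP; rewrite /potential leqNgt short /= !inE => /andP[wW].
rewrite (negbTE wW) /= => /andP[wA top_w].
case/orP: (better_total v neq_xw) => // b_xw.
have : #|[set y in A :\: W | better v y x]| < #|[set y in A :\: W | better v y w]|.
  apply: proper_card; apply/properP; split.
    by apply/subsetP => y; rewrite !inE => /andP[-> b_yx]; exact: better_trans b_yx b_xw.
  by exists x; rewrite inE ?xAW ?b_xw // better_irr andbF.
by move=> lt_cnt; have := leq_ltn_trans (leq_trans above (ltnW lt_cnt)) top_w; rewrite ltnn.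
Qed.

(* Exhausted buyers stay exhausted when a potential winner is selected: the
   supply drops by one, and so does the number of buyers ranked above them. *)
Lemma exhausted_select A W w :
  w \in pot A W :\: W -> exhausted A W \subset exhausted A (w |: W).
Proof.
move=> wP; apply/subsetP => x xE.
have b_wx := potential_above_exhausted wP xE.
have neq_xw : x != w by apply: contraTneq b_wx => ->; rewrite better_irr.
have wW : w \notin W by move: wP; rewrite inE => /andP[].
have wAW := potential_new wP.
move: xE; rewrite exhaustedE => /and3P[short xAW above].
have sub_AW : A :\: (w |: W) = (A :\: W) :\ w.
  by apply/setP => y; rewrite !inE negb_or andbA.
have sub_above :
    [set y in A :\: (w |: W) | better v y x] = [set y in A :\: W | better v y x] :\ w.
  by apply/setP => y; rewrite sub_AW !inE -!andbA.
have x_rest : x \in (A :\: W) :\ w by rewrite in_setD1 neq_xw xAW.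
have rest_gt0 : 0 < #|(A :\: W) :\ w| by apply/card_gt0P; exists x.
have card_AW : #|A :\: W| = 1 + #|(A :\: W) :\ w| by rewrite (cardsD1 w) wAW.
have card_above : #|[set y in A :\: W | better v y x]| =
                  1 + #|[set y in A :\: W | better v y x] :\ w|.
  by rewrite (cardsD1 w) inE wAW b_wx.
have card_W : #|w |: W| = 1 + #|W| by rewrite cardsU1 wW.
have still_short : m - #|w |: W| < #|A :\: (w |: W)|.
  by rewrite card_W sub_AW; lia.
have still_above : m - #|w |: W| <= #|[set y in A :\: (w |: W) | better v y x]|.
  by rewrite card_W sub_above; lia.
by rewrite exhaustedE still_short still_above sub_AW x_rest.
Qed.

Lemma closure_step_cases W A :
  closure_step m v r W A = A \/
  exists2 x, x \in expanders A W & closure_step m v r W A = A :|: r x.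
Proof.
by rewrite /closure_step; case: pickP => [x /andP[x_exp _]|_]; [right; exists x | left].
Qed.

Lemma closure_step_ext W A : A \subset closure_step m v r W A.
Proof. by case: (closure_step_cases W A) => [->|[x _ ->]]; rewrite ?subsetUl. Qed.

Lemma closure_ext A W : A \subset cl A W.
Proof. exact: (iter_extensive_mono (closure_step_ext W) A (leq0n n.+1)). Qed.

Lemma closure_closed A W x : x \in expanders (cl A W) W -> r x \subset cl A W.
Proof.
move=> x_exp; apply/negPn/negP => x_open.
have := iter_extensive_fixpoint (closure_step_ext W) A.
rewrite card_ord -/(cl A W) /closure_step.
case: pickP => [y /andP[_ y_open] fixed|/(_ x)]; last by rewrite x_exp x_open.
by move: y_open; rewrite -fixed subsetUr.
Qed.

Lemma closure_ind (Q : {set 'I_n} -> Prop) A W :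
  Q A ->
  (forall B x, A \subset B -> B \subset cl A W -> x \in expanders B W ->
     Q B -> Q (B :|: r x)) ->
  Q (cl A W).
Proof.
move=> QA Qstep; rewrite /closure.
suff QW : forall j, j <= n.+1 -> Q (iter j (closure_step m v r W) A) by exact: QW.
elim=> [|j IH] // lt_j; have Qj := IH (ltnW lt_j).
rewrite iterS.
case: (closure_step_cases W (iter j (closure_step m v r W) A)) => [->|[x x_exp ->]] //.
apply: (Qstep _ x _ _ x_exp Qj).
- exact: (iter_extensive_mono (closure_step_ext W) A (leq0n j)).
- exact: (iter_extensive_mono (closure_step_ext W) A (ltnW lt_j)).
Qed.

Lemma expanders_grow A A' W : A \subset A' -> expanders A W \subset expanders A' W.
Proof. by move=> sAA'; rewrite setUS // exhausted_grow. Qed.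

Lemma expanders_sub A W : W \subset A -> expanders A W \subset A.
Proof. by move=> sWA; rewrite subUset sWA subsetDl. Qed.

Lemma potential_not_expander A W w : w \in pot A W :\: W -> w \notin expanders A W.
Proof. by rewrite /expanders /exhausted !inE negb_or => /andP[-> ->]. Qed.

Lemma select_some A W w : sel A W = Some w -> w \in pot A W :\: W.
Proof. by rewrite /select; case: pickP => // w' /andP[w'P _] [<-]. Qed.

(* Selection fails only when there is no potential winner left: the highest
   priority buyer of P \ W would pass the selection test. *)
Lemma select_none A W : sel A W = None -> pot A W :\: W = set0.
Proof.
rewrite /select; case: pickP => // none _; apply/eqP; apply: contraT => P_ne.
have [w wP wbest] := better_best (fun y => prio (r y)) P_ne.
have := none w; rewrite wP /= => <-.
apply/forall_inP => y /wbest; rewrite /better negb_or negb_and -leNgt le_eqVlt.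
by case/andP=> /orP[/eqP->|->//]; rewrite eqxx ltxx /= -leqNgt.
Qed.

(* Once there are more unallocated explored buyers than remaining items, the
   potential-winner set always contains new buyers; so if it has none, either
   nothing unallocated is explored or the supply is exhausted. *)
Lemma no_potential_left A W : pot A W :\: W = set0 -> A :\: W != set0 -> m <= #|W|.
Proof.
move=> none AW_ne; move: none; rewrite /potential; case: leqP => [_ AW0|_].
  by rewrite AW0 eqxx in AW_ne.
have [|pos none] := posnP (m - #|W|); first by move/eqP; rewrite subn_eq0.
have /set0Pn [y ytop] := topk_nonempty v AW_ne pos.
have := subsetP (topk_sub v _ _) y ytop; rewrite inE => /andP[yW _].
by move/setP/(_ y): none; rewrite in_setD in_setU ytop orbT andbT yW in_set0.
Qed.

Lemma last_item_exhausts A W w x :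
  m <= #|W|.+1 -> w \in pot A W :\: W -> x \in A :\: W -> x != w ->
  x \in exhausted A W.
Proof.
move=> few wP xAW neq_xw; have wAW := potential_new wP.
have one_left : m - #|W| <= 1 by rewrite leq_subLR addn1.
move: wP; rewrite /exhausted /potential; case: leqP => [fits _|_].
  have : #|[set x; w]| <= #|A :\: W| by apply: subset_leq_card; rewrite subUset !sub1set xAW wAW.
  by rewrite cards2 neq_xw => /leq_trans/(_ (leq_trans fits one_left)).
rewrite in_setD in_setU => /andP[wW /orP[wW'|wtop]]; first by rewrite wW' in wW.
move: xAW; rewrite !in_setD in_setU => /andP[/negbTE -> ->]; rewrite andbT.
by apply/negP => xtop; move/eqP: neq_xw; apply; exact: topk_unique one_left xtop wtop.
Qed.

Lemma last_round_expanders A W w :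
  sel A W = Some w -> sel (cl A (w |: W)) (w |: W) = None ->
  {in A, forall x, x != w -> x \in expanders A W}.
Proof.
move=> /select_some wP /select_none none x xA neq_xw.
have wW : w \notin W by move: wP; rewrite inE => /andP[].
rewrite inE; case xW: (x \in W) => //=.
have x_left : x \in cl A (w |: W) :\: (w |: W).
  by rewrite !inE negb_or neq_xw xW (subsetP (closure_ext A _)).
apply: last_item_exhausts wP _ neq_xw; last by rewrite inE xW xA.
have left_ne : cl A (w |: W) :\: (w |: W) != set0 by apply/set0Pn; exists x.
by have := no_potential_left none left_ne; rewrite cardsU1 wW.
Qed.

Inductive later : {set 'I_n} -> {set 'I_n} -> {set 'I_n} -> {set 'I_n} -> Prop :=
  | later_refl A W : later A W A W
  | later_round A W w A' W' :
      sel (cl A W) W = Some w -> later (cl A W) (w |: W) A' W' -> later A W A' W'.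

Lemma later_explored A W A' W' : later A W A' W' -> A \subset A'.
Proof.
elim=> {A W A' W'} [A W|A W w A' W' _ _ IH]; first exact: subxx.
exact: subset_trans (closure_ext A W) IH.
Qed.

(* A round keeps every expander an expander: winners stay winners and
   exhausted buyers stay exhausted. *)
Lemma round_expanders A W w :
  sel (cl A W) W = Some w ->
  expanders (cl A W) W \subset expanders (cl (cl A W) (w |: W)) (w |: W).
Proof.
move=> /select_some wP; apply: subset_trans (expanders_grow _ (closure_ext _ _)).
exact: setUSS (subsetUr _ _) (exhausted_select wP).
Qed.

Lemma later_expanders A W A' W' :
  later A W A' W' -> expanders (cl A W) W \subset expanders (cl A' W') W'.
Proof.
elim=> {A W A' W'} [A W|A W w A' W' sel_w _ IH]; first exact: subxx.
exact: subset_trans (round_expanders sel_w) IH.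
Qed.

Lemma round_winners_explored A W w :
  sel (cl A W) W = Some w -> W \subset A -> w |: W \subset cl A W.
Proof.
move=> /select_some/potential_new wAW sWA.
rewrite subUset sub1set (subsetP (subsetDl _ W)) //.
exact: subset_trans sWA (closure_ext A W).
Qed.

Local Notation run := (mudan_run m v r prio).

Lemma run_succ k A W :
  run k.+1 A W = if sel (cl A W) W is Some w
                 then (cl A W, w) :: run k (cl A W) (w |: W) else [::].
Proof. by []. Qed.

(* Locating the last round of a run with enough fuel (every round adds a new
   winner, so n + 1 rounds always suffice): it selects w from a closed
   explored set, and nothing can be selected after it. *)
Lemma run_last k A W t A1 w :
  n < #|W| + k -> run k A W = rcons t (A1, w) ->
  exists A0 W0, [/\ later A W A0 W0, A1 = cl A0 W0, sel A1 W0 = Some w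
                  & sel (cl A1 (w |: W0)) (w |: W0) = None].
Proof.
elim: k A W t => [|k IH] A W t fuel; first by case: t.
rewrite run_succ; case sel_w: (sel (cl A W) W) => [w'|]; last by case: t.
have w'W : w' \notin W by move: (select_some sel_w); rewrite inE => /andP[].
have card_w'W : #|w' |: W| = #|W|.+1 by rewrite cardsU1 w'W.
case: t => [|a t] [].
  move=> <- <-; case: k {IH} fuel => [|k] fuel.
    have := max_card (mem (w' |: W)); rewrite card_ord card_w'W => small.
    by move: fuel; rewrite addn1 ltnS leqNgt small.
  rewrite run_succ; case sel_none: (sel (cl (cl A W) (w' |: W)) (w' |: W)) => // _.
  by exists A, W; split; first exact: later_refl.
move=> _ run_rest.
have [|A0 [W0 [later_0 -> sel_0 none_0]]] := IH _ _ _ _ run_rest.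
  by rewrite card_w'W addSnnS.
by exists A0, W0; split => //; exact: later_round sel_w later_0.
Qed.

Variable rs : {set 'I_n}.
Local Notation reach w i := (reach_avoiding rs r w i).

Lemma reach_seller w i : i \in rs -> i != w -> reach w i.
Proof. by move=> rs_i neq_iw; apply/existsP; exists i; rewrite rs_i neq_iw connect0. Qed.

Lemma reach_step w x i : reach w x -> x != w -> i != w -> i \in r x -> reach w i.
Proof.
case/existsP=> j /andP[rs_j /andP[neq_jw path_jx]] neq_xw neq_iw rx_i.
apply/existsP; exists j; rewrite rs_j neq_jw.
by apply: connect_trans path_jx (connect1 _); rewrite neq_xw neq_iw rx_i.
Qed.

(* If w is not an expander of the closure, the closure only opens
   neighbourhoods of buyers other than w, so it preserves reachability
   avoiding w. *)
Lemma closure_reach A W w :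
  W \subset A -> w \notin expanders (cl A W) W ->
  {in A, forall i, i != w -> reach w i} -> {in cl A W, forall i, i != w -> reach w i}.
Proof.
move=> sWA w_passive reachA.
apply: (closure_ind (Q := fun B => {in B, forall i, i != w -> reach w i}) (W := W) reachA).
move=> B x sAB sBcl x_exp reachB i.
have neq_xw : x != w.
  by apply: contraNneq w_passive => <-; exact: subsetP (expanders_grow W sBcl) x x_exp.
have Bx : x \in B by exact: subsetP (expanders_sub (subset_trans sWA sAB)) x x_exp.
rewrite inE => /orP[Bi|rx_i] neq_iw; first exact: reachB i Bi neq_iw.
exact: reach_step (reachB x Bx neq_xw) neq_xw neq_iw rx_i.
Qed.

Lemma later_reach A W A0 W0 w :
  later A W A0 W0 -> W \subset A -> w \notin expanders (cl A0 W0) W0 ->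
  {in A, forall i, i != w -> reach w i} -> {in cl A0 W0, forall i, i != w -> reach w i}.
Proof.
move=> run_to; elim: run_to w => {A W A0 W0} [A W|A W w' A0 W0 sel_w' run_to IH] w sWA.
  exact: closure_reach.
move=> w_passive reachA.
have w_passive_now : w \notin expanders (cl A W) W.
  apply: contra w_passive.
  exact: subsetP (later_expanders (later_round sel_w' run_to)) w.
apply: IH (round_winners_explored sel_w' sWA) w_passive _.
exact: closure_reach sWA w_passive_now reachA.
Qed.

Lemma reach_explored A w i :
  rs \subset A -> {in A, forall x, x != w -> r x \subset A} -> reach w i -> i \in A.
Proof.
move=> rsA closedA /existsP[j /andP[rs_j /andP[neq_jw /connectP[p p_path ->]]]].
elim: p j {rs_j}(subsetP rsA j rs_j) neq_jw p_path => [|y p IH] j Aj neq_jw //=.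
case/andP=> /and3P[_ neq_yw rj_y] p_path.
exact: IH (subsetP (closedA j Aj neq_jw) y rj_y) neq_yw p_path.
Qed.

End Mudan.

Theorem lemma3 (R : realDomainType) (n m : nat) (rs : {set 'I_n})
    (r : 'I_n -> {set 'I_n}) (v : 'I_n -> R) (prio : {set 'I_n} -> R) :
  (1 <= m)%N ->
  (forall i, (0 <= v i)%R) ->
  (forall S T : {set 'I_n}, S \subset T -> (prio S <= prio T)%R) ->
  forall (t : seq ({set 'I_n} * 'I_n)) (A : {set 'I_n}) (wstar : 'I_n),
    mudan_trace m v r prio rs = rcons t (A, wstar) ->
    forall i : 'I_n, i != wstar ->
      (i \in A) = reach_avoiding rs r wstar i.
Proof.
move=> _ _ _ t A w trace i neq_iw.
have fuel : n < #|(set0 : {set 'I_n})| + n.+1 by rewrite cards0.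
have [A0 [W0 [run_to A_def sel_w sel_none]]] := run_last fuel trace.
have w_passive : w \notin expanders m v (closure m v r A0 W0) W0.
  by rewrite -A_def; exact: potential_not_expander (select_some sel_w).
apply/idP/idP => [Ai|reach_i].
  have seller_reach : {in rs, forall j, j != w -> reach_avoiding rs r w j}.
    by move=> j; exact: reach_seller.
  by apply: (later_reach run_to (sub0set _) w_passive seller_reach) neq_iw; rewrite -A_def.
apply: reach_explored reach_i.
  by rewrite A_def (subset_trans (later_explored run_to)) ?closure_ext.
move=> x Ax neq_xw; rewrite A_def closure_closed // -A_def.
exact: last_round_expanders sel_w sel_none x Ax neq_xw.
Qed.
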